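(* Let $n\ge2$. Then: (i) for all $I,J\subseteq[1,n-1]$: $a_I+a_J\in A_n$ if and only if $I\cap J=\emptyset$; (ii) for every $I\subseteq[1,n-1]$ and every $J$ that is either a subset of $[1,n-1]$ or of the form $Z\cup\{n+1\}$ with $Z\subseteq[1,n-1]$: $a_I+a_J\in B_n$ if and only if $I\cap J=\emptyset$; moreover, for $I\subseteq[1,n-1]$, $a_{[1,n]}+a_I\in B_n$ if and only if $I=\emptyset$; (iii) for all $I,J\subseteq[1,n+1]$: $a_I+a_J\in C_n$ if and only if either $I\cap J=\emptyset$, or $I\cup J=[1,n]$ and $n\in I\cap J$.
   Context: $[x,y]=\{z\in\mathbb Z:x\le z\le y\}$. Fix an integer $n\ge2$ and positive integers $a_1,\dots,a_{n+1}$ with (C1) $a_{n+1}=a_1+\dots+a_{n-1}+2a_n$ and (C2) $a_{i+1}>2(a_1+\dots+a_i)$ for all $i\in[1,n-1]$. For $I\subseteq[1,n+1]$ put $a_I=\sum_{i\in I}a_i$ ($a_\emptyset=0$). Define $A_n=\{a_I:I\subseteq[1,n-1]\}$, $B_n=A_n\cup\{a_{[1,n]}\}\cup(A_n+a_{n+1})$, $C_n=\{a_I:I\subseteq[1,n+1]\}$. *)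

(* Indices 1..n+1 are represented in 'I_n.+2 (index 0 unused). *)
From mathcomp Require Import all_boot.
Set Implicit Arguments. Unset Strict Implicit. Unset Printing Implicit Defensive.

Definition iv (n x y : nat) : {set 'I_n.+2} := [set i : 'I_n.+2 | x <= i <= y].

Definition aS (n : nat) (a : nat -> nat) (I : {set 'I_n.+2}) : nat :=
  \sum_(i in I) a i.

Definition inA (n : nat) (a : nat -> nat) (x : nat) : Prop :=
  exists2 K : {set 'I_n.+2}, K \subset iv n 1 (n - 1) & x = aS a K.

(* x \in B_n = A_n u {a_[1,n]} u (A_n + a_{n+1}) *)
Definition inB (n : nat) (a : nat -> nat) (x : nat) : Prop :=
  [\/ inA n a x, x = aS a (iv n 1 n) | exists y, inA n a y /\ x = y + a n.+1].

Definition inC (n : nat) (a : nat -> nat) (x : nat) : Prop :=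
  exists2 K : {set 'I_n.+2}, K \subset iv n 1 n.+1 & x = aS a K.

(* For 1 <= k <= n the weights satisfy 2 (a_1 + ... + a_(k-1)) < a_k, so a number has at most one
   expansion sum_(i <= n) c_i a_i whose digits c_i (i < n) lie in {0,1,2}.  The sum a_I + a_J has
   digits chi_I + chi_J, an element a_K of A_n has digits in {0,1}, and C1 says that a_(n+1) has
   the expansion (1,...,1,2).  Comparing digits yields the conditions on I and J; the summands
   involving a_(n+1) are sorted out by size, since a_K < a_(n+1) whenever K is a subset of [1,n]. *)
From mathcomp Require Import all_boot zify.
Set Implicit Arguments. Unset Strict Implicit. Unset Printing Implicit Defensive.

Section SuperincreasingDigits.
Variables (b m : nat) (w : nat -> nat).
Hypothesis w_superinc : forall k, 1 <= k <= m -> b * \sum_(1 <= j < k) w j < w k.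

Lemma digit_sum_lt (c : nat -> nat) k : 1 <= k <= m ->
  (forall i, 1 <= i < k -> c i <= b) -> \sum_(1 <= i < k) c i * w i < w k.
Proof.
move=> hk hc; apply: leq_ltn_trans (w_superinc hk).
rewrite big_distrr /= big_nat_cond [leqRHS]big_nat_cond.
by apply: leq_sum => i /andP[hi _]; rewrite leq_mul2r hc ?orbT.
Qed.

Lemma top_digit_eq X Y W c d : X < W -> Y < W -> X + c * W = Y + d * W -> c = d.
Proof.
move=> hX hY e; have W_gt0 : 0 < W := leq_ltn_trans (leq0n X) hX.
have : (c * W + X) %/ W = (d * W + Y) %/ W by rewrite addnC e addnC.
by rewrite !divnMDl // !divn_small // !addn0.
Qed.

Lemma digits_unique k (c d : nat -> nat) : k <= m ->
  (forall i, 1 <= i < k -> c i <= b) -> (forall i, 1 <= i < k -> d i <= b) ->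
  \sum_(1 <= i < k.+1) c i * w i = \sum_(1 <= i < k.+1) d i * w i ->
  forall i, 1 <= i <= k -> c i = d i.
Proof.
elim: k => [|k IH] hk hc hd; first by move=> _ i; lia.
rewrite !(big_nat_recr k.+1) //= => e.
have hk1 : 1 <= k.+1 <= m by lia.
have ck := top_digit_eq (digit_sum_lt hk1 hc) (digit_sum_lt hk1 hd) e.
move: e; rewrite ck => /addIn e i hi.
have [i_lt | -> //] : i < k.+1 \/ i = k.+1 by lia.
by apply: IH => // [|j hj|j hj|]; [lia | apply: hc; lia | apply: hd; lia | lia].
Qed.

End SuperincreasingDigits.

Lemma sum_mulnDl (c d w : nat -> nat) p q :
  \sum_(p <= i < q) c i * w i + \sum_(p <= i < q) d i * w i =
  \sum_(p <= i < q) (c i + d i) * w i.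
Proof. by rewrite -big_split; apply: eq_bigr => i _; rewrite mulnDl. Qed.

Section SubsetSums.
Variables (n : nat) (a : nat -> nat).
Implicit Types (I J K : {set 'I_n.+2}).

Lemma aS_set0 : aS a (set0 : {set 'I_n.+2}) = 0.
Proof. by rewrite /aS big_set0. Qed.

Lemma aS_setU1 (x : 'I_n.+2) I : x \notin I -> aS a (x |: I) = a x + aS a I.
Proof. exact: big_setU1. Qed.

Lemma setD1_notin (x : 'I_n.+2) I : x \notin I -> I :\ x = I.
Proof. by move=> xI; apply/setDidPl; rewrite disjoint_sym disjoints1. Qed.

Lemma aS_setD1 (x : 'I_n.+2) I : aS a I = (x \in I) * a x + aS a (I :\ x).
Proof.
case xI: (x \in I); first by rewrite /aS (big_setD1 x xI) mul1n.
by rewrite setD1_notin ?xI.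
Qed.

Lemma aS_setU_setI I J : aS a (I :|: J) + aS a (I :&: J) = aS a I + aS a J.
Proof.
rewrite /aS !(big_mkcond (fun i => i \in _)) -!big_split /=; apply: eq_bigr => i _.
by rewrite !inE; case: (i \in I); case: (i \in J); rewrite ?addn0.
Qed.

Lemma aS_setU_disjoint I J : I :&: J = set0 -> aS a (I :|: J) = aS a I + aS a J.
Proof. by move=> IJ0; rewrite -aS_setU_setI IJ0 aS_set0 addn0. Qed.

Lemma aS_subset I J : I \subset J -> aS a I <= aS a J.
Proof. by move=> sIJ; rewrite /aS [leqRHS](big_setID I) /= (setIidPr sIJ) leq_addr. Qed.

Lemma aS_eq0 I : (forall i, i \in I -> 0 < a i) -> aS a I = 0 -> I = set0.
Proof.
move=> a_pos aS_I0; apply/setP => x; rewrite inE; apply/negbTE/negP => xI.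
by move: aS_I0; rewrite (aS_setD1 x) xI; have := a_pos x xI; lia.
Qed.

Lemma setIU1_notin (x : 'I_n.+2) I J : x \notin I -> I :&: (x |: J) = I :&: J.
Proof. by move=> xI; apply/setP => y; rewrite !inE; case: eqP => // ->; rewrite (negbTE xI). Qed.

Lemma subset_iv_bounds I x y (z : 'I_n.+2) : I \subset iv n x y -> z \in I -> x <= z <= y.
Proof. by move=> /subsetP sI /sI; rewrite inE. Qed.

Lemma iv_subset x y z : y <= z -> iv n x y \subset iv n x z.
Proof. by move=> yz; apply/subsetP => i; rewrite !inE => /andP[-> /leq_trans->]. Qed.

Lemma max_notin_iv I x y : y <= n -> I \subset iv n x y -> ord_max \notin I.
Proof. by move=> yn sI; apply/negP => /(subset_iv_bounds sI) /=; lia. Qed.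

Lemma subset_iv_split I : I \subset iv n 1 n.+1 ->
  exists2 I0 : {set 'I_n.+2}, I0 \subset iv n 1 n & I = I0 \/ I = ord_max |: I0.
Proof.
move=> sI; exists (I :\ ord_max).
  apply/subsetP => x; rewrite !inE => /andP[xmax /(subset_iv_bounds sI) hx].
  by move: xmax; rewrite -val_eqE /=; lia.
by case mI: (ord_max \in I); [right; rewrite setD1K | left; rewrite setD1_notin ?mI].
Qed.

(* Beyond [n.+1], [inord] returns [ord0]; [chi] is only evaluated on [1, n]. *)
Definition chi I (i : nat) : nat := (inord i : 'I_n.+2) \in I.

Lemma chi_val I (x : 'I_n.+2) : chi I x = (x \in I).
Proof. by rewrite /chi inord_val. Qed.

Lemma chi_le1 I i : chi I i <= 1.
Proof. by rewrite /chi; case: (_ \in _). Qed.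

Lemma chi_add_le2 I J i : chi I i + chi J i <= 2.
Proof. exact: leq_add (chi_le1 I i) (chi_le1 J i). Qed.

Lemma aS_digits I : I \subset iv n 1 n -> aS a I = \sum_(1 <= i < n.+1) chi I i * a i.
Proof.
move=> sI; have chi_out i : i < n.+2 -> ~~ (1 <= i <= n) -> chi I i = 0.
  move=> hi hout; rewrite /chi; case: (boolP (_ \in I)) => // /(subset_iv_bounds sI).
  by rewrite inordK // (negbTE hout).
rewrite /aS big_mkcond /=; transitivity (\sum_(0 <= i < n.+2) chi I i * a i).
  by rewrite big_mkord; apply: eq_bigr => i _; rewrite chi_val; case: (i \in I); rewrite ?mul1n.
rewrite (big_cat_nat _ (n := 1)) // (big_cat_nat _ (m := 1) (n := n.+1)) //= !big_nat1.
by rewrite !chi_out ?ltnn ?andbF // add0n addn0.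
Qed.

Lemma aS_iv y : y <= n -> aS a (iv n 1 y) = \sum_(1 <= i < y.+1) a i.
Proof.
move=> yn; rewrite aS_digits ?iv_subset // (big_cat_nat _ (n := y.+1)) //=.
rewrite [X in _ + X]big_nat_cond [X in _ + X]big1 ?addn0; last first.
  move=> i; rewrite andbT => /andP[yi ilt]; rewrite /chi inE inordK; last by lia.
  by have -> : (1 <= i <= y) = false by lia.
apply: eq_big_nat => i yi; rewrite /chi inE inordK; last by lia.
have -> : (1 <= i <= y) = true by lia.
by rewrite mul1n.
Qed.

End SubsetSums.

Section SuperincreasingWeights.
Variables (n : nat) (a : nat -> nat).
Hypothesis n_ge2 : 2 <= n.
Hypothesis a_pos : forall i, 1 <= i <= n.+1 -> 0 < a i.
Hypothesis a_top : a n.+1 = \sum_(1 <= i < n) a i + 2 * a n.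
Hypothesis a_superinc :
  forall i, 1 <= i <= n - 1 -> 2 * (\sum_(1 <= j < i.+1) a j) < a i.+1.
Implicit Types (I J K Z : {set 'I_n.+2}).

Local Notation S := (\sum_(1 <= i < n) a i).

Lemma superincreasing k : 1 <= k <= n -> 2 * \sum_(1 <= j < k) a j < a k.
Proof.
case: k => [// | [_ | k hk]]; first by rewrite big_geq // a_pos.
by apply: a_superinc; lia.
Qed.

Lemma sum_lt_a_n : 2 * S < a n.
Proof. by apply: superincreasing; lia. Qed.

Lemma digits_eq (c d : nat -> nat) :
  (forall i, 1 <= i < n -> c i <= 2) -> (forall i, 1 <= i < n -> d i <= 2) ->
  \sum_(1 <= i < n.+1) c i * a i = \sum_(1 <= i < n.+1) d i * a i ->
  forall i, 1 <= i <= n -> c i = d i.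
Proof. by move=> hc hd e; apply: (digits_unique superincreasing (leqnn n) hc hd e). Qed.

Lemma a_top_digits : a n.+1 = \sum_(1 <= i < n.+1) (1 + (i == n)) * a i.
Proof.
rewrite a_top big_nat_recr /=; last by lia.
rewrite eqxx; congr (_ + _); apply: eq_big_nat => i hi.
have -> : (i == n) = false by lia.
by rewrite addn0 mul1n.
Qed.

Lemma disjoint_of_aS_add_eq I J K :
  I \subset iv n 1 n -> J \subset iv n 1 n -> K \subset iv n 1 n ->
  aS a I + aS a J = aS a K -> I :&: J = set0.
Proof.
move=> sI sJ sK e.
have digits : forall i, 1 <= i <= n -> chi I i + chi J i = chi K i.
  apply: digits_eq => [i _ | i _ |]; first exact: chi_add_le2.
    exact: leq_trans (chi_le1 K i) _.
  by rewrite -sum_mulnDl -!aS_digits.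
apply/setP => x; rewrite !inE; apply/negbTE/negP => /andP[xI xJ].
have := digits x (subset_iv_bounds sI xI); rewrite !chi_val xI xJ.
by case: (x \in K).
Qed.

Lemma cover_of_aS_add_eq_top I J K :
  I \subset iv n 1 n -> J \subset iv n 1 n -> K \subset iv n 1 n ->
  aS a I + aS a J = a n.+1 + aS a K ->
  I :|: J = iv n 1 n /\ (inord n : 'I_n.+2) \in I :&: J.
Proof.
move=> sI sJ sK e.
have digits : forall i, 1 <= i <= n -> chi I i + chi J i = 1 + (i == n) + chi K i.
  apply: digits_eq => [i _ | i hi |]; first exact: chi_add_le2.
    by have := chi_le1 K i; case: eqP => [?|_]; lia.
  by rewrite -[LHS]sum_mulnDl -[RHS]sum_mulnDl -a_top_digits -!aS_digits.
split.
  apply/setP => x; rewrite !inE; apply/idP/idP.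
    by case/orP => [/(subset_iv_bounds sI) | /(subset_iv_bounds sJ)].
  move=> hx; have := digits x hx; rewrite !chi_val.
  by case: (x \in I); case: (x \in J) => //=; lia.
have hn : 1 <= n <= n by lia.
move: (digits n hn); rewrite eqxx /chi !inE.
by case: (_ \in I); case: (_ \in J) => //=; lia.
Qed.

Lemma subset_iv_pred K : K \subset iv n 1 (n - 1) -> K \subset iv n 1 n.
Proof. by move=> sK; apply: subset_trans sK (iv_subset _ _ (leq_subr 1 n)). Qed.

Lemma aS_le_sum K : K \subset iv n 1 (n - 1) -> aS a K <= S.
Proof.
move=> sK; have := aS_subset a sK; rewrite aS_iv ?leq_subr // subn1 prednK //.
by lia.
Qed.

Lemma aS_iv_full : aS a (iv n 1 n) = S + a n.
Proof. by rewrite aS_iv // big_nat_recr //=; lia. Qed.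

Lemma aS_lt_top K : K \subset iv n 1 n -> aS a K < a n.+1.
Proof.
move=> sK; have := aS_subset a sK; have := sum_lt_a_n.
by rewrite aS_iv_full a_top; lia.
Qed.

Lemma inA_le y : inA n a y -> y <= S.
Proof. by case=> K sK ->; exact: aS_le_sum. Qed.

Lemma inA_aS_add I J : I \subset iv n 1 (n - 1) -> J \subset iv n 1 (n - 1) ->
  inA n a (aS a I + aS a J) <-> I :&: J = set0.
Proof.
move=> sI sJ; split=> [[K sK] | IJ0].
  exact: disjoint_of_aS_add_eq (subset_iv_pred sI) (subset_iv_pred sJ) (subset_iv_pred sK).
by exists (I :|: J); rewrite ?subUset ?sI ?sJ ?aS_setU_disjoint.
Qed.

Lemma inB_aS_add I J : I \subset iv n 1 (n - 1) -> J \subset iv n 1 (n - 1) ->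
  inB n a (aS a I + aS a J) <-> I :&: J = set0.
Proof.
move=> sI sJ; have := aS_le_sum sI; have := aS_le_sum sJ; have := sum_lt_a_n.
rewrite -(inA_aS_add sI sJ) => S_lt J_le I_le.
split=> [[// | e | [y [_ e]]] | ?]; last exact: Or31.
  by move: e; rewrite aS_iv_full; lia.
by move: e; rewrite a_top; lia.
Qed.

Lemma inB_aS_add_max I Z : I \subset iv n 1 (n - 1) -> Z \subset iv n 1 (n - 1) ->
  inB n a (aS a I + aS a (Z :|: [set ord_max])) <-> I :&: (Z :|: [set ord_max]) = set0.
Proof.
move=> sI sZ; have mI := max_notin_iv (leq_subr 1 n) sI.
have mZ := max_notin_iv (leq_subr 1 n) sZ.
have := aS_le_sum sI; have := aS_le_sum sZ; have := sum_lt_a_n.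
rewrite setUC aS_setU1 //= setIU1_notin // -(inA_aS_add sI sZ) => S_lt Z_le I_le.
split=> [[/inA_le | e | [y [yA e]]] | IZ].
- by rewrite a_top; lia.
- by move: e; rewrite aS_iv_full a_top; lia.
- by rewrite (_ : aS a I + aS a Z = y) //; lia.
- by apply: Or33; exists (aS a I + aS a Z); split => //; lia.
Qed.

Lemma inB_aS_iv_add I : I \subset iv n 1 (n - 1) ->
  inB n a (aS a (iv n 1 n) + aS a I) <-> I = set0.
Proof.
move=> sI; have := aS_le_sum sI; have := sum_lt_a_n => S_lt I_le.
split=> [[/inA_le | e | [y [/inA_le y_le e]]] | ->].
- by rewrite aS_iv_full; lia.
- apply: (aS_eq0 (a := a)) => [x xI | ]; last by lia.
  by apply: a_pos; have := subset_iv_bounds sI xI; lia.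
- by move: e; rewrite aS_iv_full a_top; lia.
- by rewrite aS_set0 addn0; apply: Or32.
Qed.

Lemma disjoint_or_cover_of_inC I J : I \subset iv n 1 n.+1 -> J \subset iv n 1 n.+1 ->
  inC n a (aS a I + aS a J) ->
  I :&: J = set0 \/ (I :|: J = iv n 1 n /\ (inord n : 'I_n.+2) \in I :&: J).
Proof.
move=> sI sJ [K sK].
have [I0 sI0 eI] := subset_iv_split sI; have mI0 := max_notin_iv (leqnn n) sI0.
have [J0 sJ0 eJ] := subset_iv_split sJ; have mJ0 := max_notin_iv (leqnn n) sJ0.
have [K0 sK0 eK] := subset_iv_split sK; have mK0 := max_notin_iv (leqnn n) sK0.
have K0_lt := aS_lt_top sK0.
(* The impossible cases have a_(n+1) more often on the left; [K0_lt] refutes them. *)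
case: eI => ->; case: eJ => ->; case: eK => ->; rewrite ?aS_setU1 //= => e.
- by left; apply: disjoint_of_aS_add_eq sI0 sJ0 sK0 e.
- by right; apply: cover_of_aS_add_eq_top sI0 sJ0 sK0 e.
- by lia.
- by left; rewrite setIU1_notin //; apply: disjoint_of_aS_add_eq sI0 sJ0 sK0 _; lia.
- by lia.
- by left; rewrite setIC setIU1_notin //; apply: disjoint_of_aS_add_eq sJ0 sI0 sK0 _; lia.
- by lia.
- by lia.
Qed.

Lemma inC_of_disjoint_or_cover I J : I \subset iv n 1 n.+1 -> J \subset iv n 1 n.+1 ->
  I :&: J = set0 \/ (I :|: J = iv n 1 n /\ (inord n : 'I_n.+2) \in I :&: J) ->
  inC n a (aS a I + aS a J).
Proof.
move=> sI sJ [IJ0 | [IJ_iv nIJ]].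
  by exists (I :|: J); rewrite ?subUset ?sI ?sJ ?aS_setU_disjoint.
set L := (I :&: J) :\ inord n.
have sL : L \subset iv n 1 n.
  rewrite -IJ_iv; apply: subset_trans (subD1set _ _) _.
  exact: subset_trans (subsetIl I J) (subsetUl I J).
exists (ord_max |: L).
  by rewrite subUset sub1set inE /= (subset_trans sL (iv_subset _ _ (leqnSn n))) andbT; lia.
rewrite aS_setU1 ?(max_notin_iv (leqnn n) sL) //= -aS_setU_setI IJ_iv aS_iv_full.
by rewrite (aS_setD1 a (inord n) (I :&: J)) nIJ inordK // mul1n -/L a_top; lia.
Qed.

End SuperincreasingWeights.

Theorem lemma3p8 (n : nat) (a : nat -> nat)
  (hn : 2 <= n)
  (hpos : forall i, 1 <= i <= n.+1 -> 0 < a i)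
  (C1 : a n.+1 = \sum_(1 <= i < n) a i + 2 * a n)
  (C2 : forall i, 1 <= i <= n - 1 -> 2 * (\sum_(1 <= j < i.+1) a j) < a i.+1) :
  [/\ (* (i) *)
      (forall I J : {set 'I_n.+2}, I \subset iv n 1 (n - 1) -> J \subset iv n 1 (n - 1) ->
         (inA n a (aS a I + aS a J) <-> I :&: J = set0)),
      (* (ii) *)
      (forall I J : {set 'I_n.+2}, I \subset iv n 1 (n - 1) ->
         (J \subset iv n 1 (n - 1) \/
          exists2 Z : {set 'I_n.+2}, Z \subset iv n 1 (n - 1) & J = Z :|: [set ord_max]) ->
         (inB n a (aS a I + aS a J) <-> I :&: J = set0)),
      (forall I : {set 'I_n.+2}, I \subset iv n 1 (n - 1) ->
         (inB n a (aS a (iv n 1 n) + aS a I) <-> I = set0))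
    & (* (iii) *)
      (forall I J : {set 'I_n.+2}, I \subset iv n 1 n.+1 -> J \subset iv n 1 n.+1 ->
         (inC n a (aS a I + aS a J) <->
          I :&: J = set0 \/ (I :|: J = iv n 1 n /\ (inord n : 'I_n.+2) \in I :&: J)))].
Proof.
split.
- by move=> I J sI sJ; apply: inA_aS_add.
- move=> I J sI [sJ | [Z sZ ->]]; first by apply: inB_aS_add.
  by apply: inB_aS_add_max.
- by move=> I sI; apply: inB_aS_iv_add.
- move=> I J sI sJ; split; first by apply: disjoint_or_cover_of_inC.
  by apply: inC_of_disjoint_or_cover.
Qed.
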